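(* Fix $k\in\mathbb N$ and consider the atom–cavity coefficients on $\mathcal D=\mathcal H'\odot\mathcal D'$ described in the context. Then there exists $\varepsilon>0$ such that for every $u\in\mathcal D$ there are constants $c(\ell,u)\ge0$, $\ell\in\mathbb N$, with $\sum_{\ell=1}^\infty c(\ell,u)\varepsilon^\ell<\infty$ and $$\|X(1)X(2)\cdots X(\ell)u\|\le c(\ell,u)\sqrt{(\ell+m)!}$$ for every $\ell\in\mathbb N$ and every choice of $X(1),\dots,X(\ell)$ from $\{K^{(k)},K^{(k)*},L^{(k)}_i,L^{(k)*}_i,M^{(k)}_i,M^{(k)*}_i,N^{(k)}_{ij},N^{(k)*}_{ij}:1\le i,j\le n\}$ (adjoints taken formally on $\mathcal D$), where $m$ is the number of occurrences of $K^{(k)}$ or $K^{(k)*}$ among $X(1),\dots,X(\ell)$.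
   Context: $\mathcal H'$ is a separable complex Hilbert space, $\{\varphi_i\}_{i\in\mathbb Z_+}$ is the canonical basis of $\ell^2(\mathbb Z_+)$, and $b^\dagger\varphi_i=\sqrt{i+1}\varphi_{i+1}$, $b\varphi_i=\sqrt i\varphi_{i-1}$, $b^\dagger b\varphi_i=i\varphi_i$ on $\mathcal D'=\mathrm{span}\{\varphi_i\}$. $\mathcal H=\mathcal H'\otimes\ell^2(\mathbb Z_+)$ and $\mathcal D=\mathcal H'\odot\mathcal D'$ (algebraic tensor product). For $n\in\mathbb N$, $1\le i,j\le n$, the coefficients are $N^{(k)}_{ij}=S^{(k)}_{ij}$, $L^{(k)}_i=F^{(k)}_ib^\dagger+G^{(k)}_i$, $K^{(k)}=E^{(k)}_{11}b^\dagger b+E^{(k)}_{10}b^\dagger+E^{(k)}_{01}b+E^{(k)}_{00}$, where $E^{(k)}_{pq},F^{(k)}_i,G^{(k)}_i,S^{(k)}_{ij}$ are bounded operators on $\mathcal H'$, and these satisfy on $\mathcal D$ the Hudson–Parthasarathy relations $K^{(k)}+K^{(k)\dagger}=-\sum_iL^{(k)}_iL^{(k)\dagger}_i$, $\sum_jN^{(k)}_{mj}N^{(k)\dagger}_{\ell j}=\sum_jN^{(k)\dagger}_{jm}N^{(k)}_{j\ell}=\delta_{m\ell}$, with $M^{(k)}_i$ defined by $M^{(k)}_i=-\sum_jN^{(k)}_{ij}L^{(k)\dagger}_j$ (here $\dagger$ is the formal adjoint on $\mathcal D$, e.g. $(Xb^\dagger)^\dagger=X^*b$ for bounded $X$ on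 $\mathcal H'$). *)

From Stdlib Require Import Reals List Arith.
Import ListNotations.
Open Scope R_scope.
Set Implicit Arguments.

Record Cplx : Type := mkC { Cre : R ; Cim : R }.
Definition C0 : Cplx := mkC 0 0.
Definition C1 : Cplx := mkC 1 0.
Definition Cadd (a b : Cplx) : Cplx := mkC (Cre a + Cre b) (Cim a + Cim b).
Definition Cmul (a b : Cplx) : Cplx :=
  mkC (Cre a * Cre b - Cim a * Cim b) (Cre a * Cim b + Cim a * Cre b).
Definition Cconj (a : Cplx) : Cplx := mkC (Cre a) (- Cim a).
Definition RtoC (r : R) : Cplx := mkC r 0.

(** * Separable complex Hilbert spaces
    (inner product conjugate-linear in the first, linear in the second slot) *)
Record CHilbert : Type := {
  hcar :> Type;
  hzero : hcar;
  hadd : hcar -> hcar -> hcar;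
  hopp : hcar -> hcar;
  hscal : Cplx -> hcar -> hcar;
  hinner : hcar -> hcar -> Cplx;
  hadd_assoc : forall x y z, hadd x (hadd y z) = hadd (hadd x y) z;
  hadd_comm : forall x y, hadd x y = hadd y x;
  hadd_0 : forall x, hadd hzero x = x;
  hadd_opp : forall x, hadd x (hopp x) = hzero;
  hscal_1 : forall x, hscal C1 x = x;
  hscal_assoc : forall a b x, hscal a (hscal b x) = hscal (Cmul a b) x;
  hscal_distr_v : forall a x y, hscal a (hadd x y) = hadd (hscal a x) (hscal a y);
  hscal_distr_c : forall a b x, hscal (Cadd a b) x = hadd (hscal a x) (hscal b x);
  hinner_conj : forall x y, hinner y x = Cconj (hinner x y);
  hinner_add_r : forall x y z, hinner x (hadd y z) = Cadd (hinner x y) (hinner x z);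
  hinner_scal_r : forall a x y, hinner x (hscal a y) = Cmul a (hinner x y);
  hinner_pos : forall x, Cim (hinner x x) = 0 /\ 0 <= Cre (hinner x x);
  hinner_def : forall x, hinner x x = C0 -> x = hzero;
  hcomplete : forall u : nat -> hcar,
    (forall eps, eps > 0 -> exists N, forall p q, (N <= p)%nat -> (N <= q)%nat ->
        sqrt (Cre (hinner (hadd (u p) (hopp (u q))) (hadd (u p) (hopp (u q))))) < eps) ->
    exists l, forall eps, eps > 0 -> exists N, forall p, (N <= p)%nat ->
        sqrt (Cre (hinner (hadd (u p) (hopp l)) (hadd (u p) (hopp l)))) < eps;
  hseparable : exists d : nat -> hcar, forall x eps, eps > 0 -> exists k,
        sqrt (Cre (hinner (hadd x (hopp (d k))) (hadd x (hopp (d k))))) < eps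
}.

Arguments hzero {c}.

Definition hnorm (H : CHilbert) (x : H) : R := sqrt (Cre (hinner H x x)).

Record BOp (H : CHilbert) : Type := {
  bfun :> H -> H;
  b_add : forall x y, bfun (hadd H x y) = hadd H (bfun x) (bfun y);
  b_scal : forall a x, bfun (hscal H a x) = hscal H a (bfun x);
  b_bdd : exists M, forall x, hnorm H (bfun x) <= M * hnorm H x
}.

Definition is_adj (H : CHilbert) (A B : BOp H) : Prop :=
  forall x y, hinner H (A x) y = hinner H x (B y).

(** * The domain D = H' (algebraic tensor) span{phi_i}.
    An element sum_i u_i (x) phi_i is represented by the finite list
    [u_0; u_1; ...] of its coefficients (missing entries are 0). *)
Definition DV (H : CHilbert) := list (hcar H).

Section DOps.
Variable H : CHilbert.

(** equality in D (lists equal up to trailing zeros) *)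
Definition deq (u v : DV H) : Prop :=
  forall i, nth i u hzero = nth i v hzero.

Fixpoint ladd (u v : DV H) : DV H :=
  match u with
  | nil => v
  | x :: u' => match v with nil => u | y :: v' => hadd H x y :: ladd u' v' end
  end.

Definition lopp (u : DV H) : DV H := map (hopp H) u.

(** X (x) 1 for an operator X on H' *)
Definition lmap (A : H -> H) (u : DV H) : DV H := map A u.

Fixpoint wmul (k : nat) (f : nat -> R) (u : DV H) : DV H :=
  match u with
  | nil => nil
  | x :: u' => hscal H (RtoC (f k)) x :: wmul (S k) f u'
  end.

(** b^dagger phi_i = sqrt(i+1) phi_{i+1} *)
Definition bdag (u : DV H) : DV H := hzero :: wmul 0 (fun i => sqrt (INR (S i))) u.
(** b phi_i = sqrt i phi_{i-1} *)
Definition bann (u : DV H) : DV H := wmul 0 (fun j => sqrt (INR (S j))) (tl u).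
(** b^dagger b phi_i = i phi_i *)
Definition numop (u : DV H) : DV H := wmul 0 INR u.

(** norm in H = H' (x) l^2 *)
Definition lnorm (u : DV H) : R :=
  sqrt (fold_right (fun x acc => Cre (hinner H x x) + acc) 0 u).

Definition dsum (n : nat) (f : nat -> DV H -> DV H) (u : DV H) : DV H :=
  fold_right (fun j acc => ladd (f j u) acc) nil (seq 1 n).
End DOps.

(** * Atom-cavity coefficients (for the fixed index k) together with the
    Hilbert-space adjoints of the bounded coefficient operators *)
Record ACCoef (H : CHilbert) : Type := {
  E11 : BOp H; E10 : BOp H; E01 : BOp H; E00 : BOp H;
  E11s : BOp H; E10s : BOp H; E01s : BOp H; E00s : BOp H;
  Fc : nat -> BOp H; Gc : nat -> BOp H;
  Fcs : nat -> BOp H; Gcs : nat -> BOp H;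
  Sc : nat -> nat -> BOp H; Scs : nat -> nat -> BOp H
}.

Section Coefs.
Variables (H : CHilbert) (n : nat) (c : ACCoef H).

Definition ac_adjoint : Prop :=
  is_adj (E11 c) (E11s c) /\ is_adj (E10 c) (E10s c) /\
  is_adj (E01 c) (E01s c) /\ is_adj (E00 c) (E00s c) /\
  (forall i, (1 <= i <= n)%nat -> is_adj (Fc c i) (Fcs c i) /\ is_adj (Gc c i) (Gcs c i)) /\
  (forall i j, (1 <= i <= n)%nat -> (1 <= j <= n)%nat -> is_adj (Sc c i j) (Scs c i j)).

Definition Kop (u : DV H) : DV H :=
  ladd (ladd (lmap (E11 c) (numop u)) (lmap (E10 c) (bdag u)))
       (ladd (lmap (E01 c) (bann u)) (lmap (E00 c) u)).
Definition Ksop (u : DV H) : DV H :=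
  ladd (ladd (lmap (E11s c) (numop u)) (lmap (E10s c) (bann u)))
       (ladd (lmap (E01s c) (bdag u)) (lmap (E00s c) u)).
Definition Lop (i : nat) (u : DV H) : DV H :=
  ladd (lmap (Fc c i) (bdag u)) (lmap (Gc c i) u).
Definition Lsop (i : nat) (u : DV H) : DV H :=
  ladd (lmap (Fcs c i) (bann u)) (lmap (Gcs c i) u).
Definition Nop (i j : nat) (u : DV H) : DV H := lmap (Sc c i j) u.
Definition Nsop (i j : nat) (u : DV H) : DV H := lmap (Scs c i j) u.
Definition Mop (i : nat) (u : DV H) : DV H := lopp (dsum n (fun j v => Nop i j (Lsop j v)) u).
Definition Msop (i : nat) (u : DV H) : DV H := lopp (dsum n (fun j v => Lop j (Nsop i j v)) u).

Definition ac_HP : Prop :=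
  (forall u, deq (ladd (Kop u) (Ksop u)) (lopp (dsum n (fun i v => Lop i (Lsop i v)) u))) /\
  (forall m l, (1 <= m <= n)%nat -> (1 <= l <= n)%nat -> forall u,
      deq (dsum n (fun j v => Nop m j (Nsop l j v)) u) (if Nat.eqb m l then u else nil)) /\
  (forall m l, (1 <= m <= n)%nat -> (1 <= l <= n)%nat -> forall u,
      deq (dsum n (fun j v => Nsop j m (Nop j l v)) u) (if Nat.eqb m l then u else nil)).
End Coefs.

Inductive Gen : Type :=
| GK | GKs | GL (i : nat) | GLs (i : nat) | GM (i : nat) | GMs (i : nat)
| GN (i j : nat) | GNs (i j : nat).

Definition gen_ok (n : nat) (g : Gen) : Prop :=
  match g with
  | GK | GKs => True
  | GL i | GLs i | GM i | GMs i => (1 <= i <= n)%nat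
  | GN i j | GNs i j => (1 <= i <= n)%nat /\ (1 <= j <= n)%nat
  end.

Definition isK (g : Gen) : nat := match g with GK | GKs => 1%nat | _ => 0%nat end.
Definition countK (xs : list Gen) : nat := fold_right (fun g acc => (isK g + acc)%nat) 0%nat xs.

Definition gen_op (H : CHilbert) (n : nat) (c : ACCoef H) (g : Gen) : DV H -> DV H :=
  match g with
  | GK => Kop c | GKs => Ksop c
  | GL i => Lop c i | GLs i => Lsop c i
  | GM i => Mop n c i | GMs i => Msop n c i
  | GN i j => Nop c i j | GNs i j => Nsop c i j
  end.

(** X(1) X(2) ... X(l) u for xs = [X(1); ...; X(l)] *)
Definition apply_gens (H : CHilbert) (n : nat) (c : ACCoef H) (xs : list Gen) (u : DV H) : DV H :=
  fold_right (fun g v => gen_op n c g v) u xs.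

From Stdlib Require Import Reals List Arith Lra Lia.
Import ListNotations.
Open Scope R_scope.

(** The estimate only uses that the coefficients are bounded operators on
    H'.

    A vector of D is a finite list of coefficients; if it has at most N
    entries (it lives in the first N Fock levels) then b^dagger, b and
    b^dagger b raise its squared norm by a factor at most N, N and N^2, and
    b^dagger moves it into the first N+1 levels.  Consequently (Lemma
    [level_gen]) every generator X maps the first N levels into the first N+1
    ones, multiplying the squared norm by at most A (N+1)^(1+[X is K or K*]),
    with A depending only on n and a common bound M for the coefficients.
    Iterating over a word of length l with m letters K, K* applied to u with
    d entries gives squared norm <= A^l (d+l)^(l+m) |u|^2, and
    x^j <= j! e^x turns this into (A e)^l (l+m)! e^d |u|^2.  Taking
    c(l,u) = sqrt(e^d |u|^2) sqrt(A e)^l and eps = 1/(2 sqrt(A e)) yields the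
    theorem, the series being geometric of ratio 1/2. *)

Section HilbertSpace.
Variable H : CHilbert.

Definition hnorm2 (x : H) : R := Cre (hinner H x x).

Lemma hnorm2_ge0 (x : H) : 0 <= hnorm2 x.
Proof. apply (hinner_pos H x). Qed.

Lemma hinner_add_l (x y z : H) :
  hinner H (hadd H x y) z = Cadd (hinner H x z) (hinner H y z).
Proof.
  rewrite (hinner_conj H z (hadd H x y)), hinner_add_r,
    (hinner_conj H z x), (hinner_conj H z y).
  destruct (hinner H z x), (hinner H z y); unfold Cconj, Cadd; simpl; f_equal; ring.
Qed.

Lemma hinner_scal_l (a : Cplx) (x z : H) :
  hinner H (hscal H a x) z = Cmul (Cconj a) (hinner H x z).
Proof.
  rewrite (hinner_conj H z (hscal H a x)), hinner_scal_r, (hinner_conj H z x).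
  destruct a, (hinner H z x); unfold Cconj, Cmul; simpl; f_equal; ring.
Qed.

(** |a + b|^2 <= 2|a|^2 + 2|b|^2, from the positivity of |a - b|^2. *)
Lemma hnorm2_add (a b : H) : hnorm2 (hadd H a b) <= 2 * hnorm2 a + 2 * hnorm2 b.
Proof.
  assert (Hdiff := hnorm2_ge0 (hadd H a (hscal H (mkC (-1) 0) b))).
  unfold hnorm2 in *.
  rewrite !hinner_add_l, !hinner_add_r, !hinner_scal_l, !hinner_scal_r in *.
  rewrite (hinner_conj H a b) in *.
  destruct (hinner H a a), (hinner H a b), (hinner H b b).
  unfold Cadd, Cmul, Cconj in *; simpl in *. lra.
Qed.

Lemma hnorm2_scal (r : R) (x : H) : hnorm2 (hscal H (RtoC r) x) = r ^ 2 * hnorm2 x.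
Proof.
  unfold hnorm2; rewrite hinner_scal_l, hinner_scal_r.
  destruct (hinner H x x); unfold RtoC, Cconj, Cmul; simpl. ring.
Qed.

Lemma hnorm2_zero : hnorm2 hzero = 0.
Proof.
  unfold hnorm2.
  assert (E : hinner H hzero hzero = hinner H hzero (hadd H hzero hzero))
    by now rewrite hadd_0.
  rewrite hinner_add_r in E. destruct (hinner H hzero hzero).
  unfold Cadd in E; simpl in *. injection E; intros; lra.
Qed.

Lemma hadd_0_r (x : H) : hadd H x hzero = x.
Proof. rewrite hadd_comm; apply hadd_0. Qed.

Lemma hscal_C0 (x : H) : hscal H C0 x = hzero.
Proof.
  set (z := hscal H C0 x).
  assert (Ez : z = hadd H z z).
  { unfold z; rewrite <- hscal_distr_c. f_equal. unfold C0, Cadd; simpl; f_equal; ring. }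
  transitivity (hadd H (hadd H z z) (hopp H z)).
  - rewrite <- hadd_assoc, hadd_opp, hadd_0_r. reflexivity.
  - rewrite <- Ez. apply hadd_opp.
Qed.

(** The opposite is scaling by -1 (the axioms do not state it directly). *)
Lemma hopp_scal (x : H) : hopp H x = hscal H (RtoC (-1)) x.
Proof.
  set (y := hscal H (RtoC (-1)) x).
  assert (E : hadd H y x = hzero).
  { unfold y. rewrite <- (hscal_1 H x) at 2. rewrite <- hscal_distr_c, <- (hscal_C0 x).
    f_equal. unfold C0, C1, RtoC, Cadd; simpl; f_equal; ring. }
  rewrite <- (hadd_0 H (hopp H x)), <- E, <- hadd_assoc, hadd_opp, hadd_0_r.
  reflexivity.
Qed.

Lemma hnorm2_opp (x : H) : hnorm2 (hopp H x) = hnorm2 x.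
Proof. rewrite hopp_scal, hnorm2_scal. ring. Qed.

Definition sq_bounded (M : R) (B : H -> H) : Prop :=
  forall x, hnorm2 (B x) <= M * hnorm2 x.

Lemma sq_bounded_mono (M M' : R) (B : H -> H) :
  M <= M' -> sq_bounded M B -> sq_bounded M' B.
Proof. intros HMM' HB x. specialize (HB x). pose proof (hnorm2_ge0 x). nra. Qed.

Lemma bop_sq_bounded (B : BOp H) : exists M, sq_bounded M B.
Proof.
  destruct (b_bdd B) as [M HM]. exists (M * M). intros x.
  specialize (HM x). unfold hnorm in HM.
  pose proof (hnorm2_ge0 x) as Hx. pose proof (hnorm2_ge0 (B x)) as HBx.
  unfold hnorm2 in *.
  set (a := Cre (hinner H (B x) (B x))) in *. set (b := Cre (hinner H x x)) in *.
  pose proof (sqrt_pos a). pose proof (sqrt_sqrt a HBx). pose proof (sqrt_sqrt b Hx).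
  assert (sqrt a * sqrt a <= (M * sqrt b) * (M * sqrt b)) by nra. nra.
Qed.

Definition dnorm2 (u : DV H) : R := fold_right (fun x acc => hnorm2 x + acc) 0 u.

Lemma lnorm_dnorm2 (u : DV H) : lnorm u = sqrt (dnorm2 u).
Proof. reflexivity. Qed.

Lemma dnorm2_cons (x : H) (u : DV H) : dnorm2 (x :: u) = hnorm2 x + dnorm2 u.
Proof. reflexivity. Qed.

Lemma dnorm2_ge0 (u : DV H) : 0 <= dnorm2 u.
Proof. induction u as [|x u IH]; simpl; [lra|]. pose proof (hnorm2_ge0 x). lra. Qed.

Lemma dnorm2_ladd (u v : DV H) : dnorm2 (ladd u v) <= 2 * dnorm2 u + 2 * dnorm2 v.
Proof.
  revert v; induction u as [|x u IH]; intros [|y v]; simpl.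
  - lra.
  - pose proof (dnorm2_ge0 (y :: v)). simpl in *. lra.
  - pose proof (dnorm2_ge0 (x :: u)). simpl in *. lra.
  - specialize (IH v). pose proof (hnorm2_add x y). lra.
Qed.

Lemma length_ladd (u v : DV H) : length (ladd u v) = Nat.max (length u) (length v).
Proof. revert v; induction u as [|x u IH]; intros [|y v]; simpl; auto. Qed.

(** [op] maps vectors living in the first [N] Fock levels into the first
    [N'] levels and multiplies their squared norm by at most [C]. *)
Definition level_bound (op : DV H -> DV H) (N N' : nat) (C : R) : Prop :=
  forall u, (length u <= N)%nat ->
    dnorm2 (op u) <= C * dnorm2 u /\ (length (op u) <= N')%nat.

Lemma level_weaken op N N' N'' C C' :
  C <= C' -> (N' <= N'')%nat -> level_bound op N N' C -> level_bound op N N'' C'.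
Proof.
  intros HC HN Hop u Hu. destruct (Hop u Hu) as [Hn Hl].
  pose proof (dnorm2_ge0 u). split; [nra | lia].
Qed.

Lemma level_raise op N N' C : level_bound op N N' C -> level_bound op N (S N') C.
Proof. apply level_weaken; [lra | lia]. Qed.

Lemma level_comp f g N1 N2 N3 C1 C2 :
  0 <= C2 -> level_bound f N1 N2 C1 -> level_bound g N2 N3 C2 ->
  level_bound (fun u => g (f u)) N1 N3 (C2 * C1).
Proof.
  intros HC2 Hf Hg u Hu. destruct (Hf u Hu) as [Hfn Hfl].
  destruct (Hg (f u) Hfl) as [Hgn Hgl]. split; [|exact Hgl].
  apply (Rle_trans _ _ _ Hgn). rewrite Rmult_assoc. apply Rmult_le_compat_l; auto.
Qed.

Lemma level_ladd f g N N' C1 C2 :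
  level_bound f N N' C1 -> level_bound g N N' C2 ->
  level_bound (fun u => ladd (f u) (g u)) N N' (2 * C1 + 2 * C2).
Proof.
  intros Hf Hg u Hu. destruct (Hf u Hu) as [Hfn Hfl], (Hg u Hu) as [Hgn Hgl].
  rewrite length_ladd. split; [|lia].
  pose proof (dnorm2_ladd (f u) (g u)). nra.
Qed.

Lemma level_lopp f N N' C :
  level_bound f N N' C -> level_bound (fun u => lopp (f u)) N N' C.
Proof.
  intros Hf u Hu. destruct (Hf u Hu) as [Hn Hl]. unfold lopp. rewrite length_map.
  split; [|exact Hl]. enough (E : forall v, dnorm2 (map (hopp H) v) = dnorm2 v)
    by (rewrite E; exact Hn).
  induction v as [|x v IH]; simpl; [reflexivity|]. rewrite hnorm2_opp, IH. reflexivity.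
Qed.

Lemma level_lmap (A : H -> H) M N : sq_bounded M A -> level_bound (lmap A) N N M.
Proof.
  intros HA u Hu. unfold lmap. rewrite length_map. split; [|exact Hu].
  clear Hu. induction u as [|x u IH]; simpl; [lra|]. specialize (HA x). lra.
Qed.

Lemma dnorm2_wmul k f B (u : DV H) :
  (forall i, (k <= i < k + length u)%nat -> f i ^ 2 <= B) ->
  dnorm2 (wmul k f u) <= B * dnorm2 u /\ length (wmul k f u) = length u.
Proof.
  revert k; induction u as [|x u IH]; intros k Hf; simpl; [split; [lra | auto]|].
  destruct (IH (S k)) as [Hn Hl]; [intros i Hi; apply Hf; simpl; lia|].
  split; [|lia]. rewrite hnorm2_scal.
  assert (f k ^ 2 <= B) by (apply Hf; simpl; lia).
  pose proof (hnorm2_ge0 x). nra.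
Qed.

Lemma level_wmul f B N :
  (forall i, (i < N)%nat -> f i ^ 2 <= B) -> level_bound (wmul 0 f) N N B.
Proof.
  intros Hf u Hu. destruct (dnorm2_wmul 0 f B u) as [Hn Hl].
  - intros i Hi. apply Hf. lia.
  - split; [exact Hn | lia].
Qed.

Lemma sqrt_succ_sq (i : nat) : sqrt (INR (S i)) ^ 2 = INR (S i).
Proof. rewrite <- Rsqr_pow2. apply Rsqr_sqrt, pos_INR. Qed.

(** The three Fock-space operators: b^dagger b and b keep the level, b^dagger
    raises it by one; the squared weights are i <= N on level i < N. *)
Lemma level_numop N : level_bound (@numop H) N N (INR N ^ 2).
Proof.
  apply level_wmul. intros i Hi.
  assert (INR i <= INR N) by (apply le_INR; lia). pose proof (pos_INR i).
  apply pow_incr. lra.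
Qed.

Lemma level_bdag N : level_bound (@bdag H) N (S N) (INR N).
Proof.
  intros u Hu. unfold bdag.
  assert (Hw : level_bound (wmul 0 (fun i => sqrt (INR (S i)))) N N (INR N)).
  { apply level_wmul. intros i Hi. rewrite sqrt_succ_sq. apply le_INR. lia. }
  destruct (Hw u Hu) as [Hn Hl]. rewrite dnorm2_cons, hnorm2_zero. cbn [length]. split; [lra | lia].
Qed.

Lemma level_bann N : level_bound (@bann H) N N (INR N).
Proof.
  unfold bann. replace (INR N) with (INR N * 1) by ring.
  apply (level_comp (@tl H) (wmul 0 (fun j => sqrt (INR (S j)))) N N N).
  - apply pos_INR.
  - intros [|x u] Hu; cbn [tl length] in *; [split; [lra | lia]|].
    rewrite dnorm2_cons. pose proof (hnorm2_ge0 x). split; [lra | lia].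
  - apply level_wmul. intros i Hi. rewrite sqrt_succ_sq. apply le_INR. lia.
Qed.

Lemma level_sum_list (js : list nat) (f : nat -> DV H -> DV H) N N' C :
  0 <= C -> (forall j, In j js -> level_bound (f j) N N' C) ->
  level_bound (fun u => fold_right (fun j acc => ladd (f j u) acc) nil js)
    N N' (4 ^ length js * C).
Proof.
  intros HC Hf. induction js as [|j js IH].
  - intros u _. cbn [fold_right length]. change (dnorm2 nil) with 0.
    pose proof (dnorm2_ge0 u). rewrite pow_O. split; [nra | lia].
  - assert (1 <= 4 ^ length js) by (apply pow_R1_Rle; lra).
    apply (level_weaken _ N N' N' (2 * C + 2 * (4 ^ length js * C))); [simpl; nra | lia|].
    apply level_ladd; [apply Hf; left; reflexivity|].
    apply IH. intros j' Hj'. apply Hf. right; exact Hj'.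
Qed.

Lemma level_dsum n (f : nat -> DV H -> DV H) N N' C :
  0 <= C -> (forall j, (1 <= j <= n)%nat -> level_bound (f j) N N' C) ->
  level_bound (dsum n f) N N' (4 ^ n * C).
Proof.
  intros HC Hf. replace (4 ^ n) with (4 ^ length (seq 1 n)) by now rewrite length_seq.
  apply level_sum_list; [exact HC|]. intros j Hj. apply in_seq in Hj. apply Hf. lia.
Qed.

End HilbertSpace.

(** [P M] holds for all sufficiently large [M]; such properties are closed
    under finite conjunctions, which produces a single bound for all the
    (finitely many) coefficient operators. *)
Definition eventually_large (P : R -> Prop) : Prop :=
  exists M0, forall M, M0 <= M -> P M.

Lemma eventually_and (P Q : R -> Prop) :
  eventually_large P -> eventually_large Q -> eventually_large (fun M => P M /\ Q M).
Proof.
  intros [M1 HP] [M2 HQ]. exists (Rmax M1 M2). intros M HM. split.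
  - apply HP. pose proof (Rmax_l M1 M2). lra.
  - apply HQ. pose proof (Rmax_r M1 M2). lra.
Qed.

Lemma eventually_forall_le (P : nat -> R -> Prop) (n : nat) :
  (forall i, eventually_large (P i)) ->
  eventually_large (fun M => forall i, (i <= n)%nat -> P i M).
Proof.
  intros HP. induction n as [|n IH].
  - destruct (HP 0%nat) as [M0 H0]. exists M0. intros M HM i Hi.
    replace i with 0%nat by lia. auto.
  - destruct (eventually_and _ _ IH (HP (S n))) as [M0 H0]. exists M0.
    intros M HM i Hi. destruct (H0 M HM) as [Hle HSn].
    destruct (Nat.eq_dec i (S n)) as [->|Hne]; [exact HSn | apply Hle; lia].
Qed.

Lemma eventually_forall_In {A : Type} (P : A -> R -> Prop) (l : list A) :
  (forall a, In a l -> eventually_large (P a)) ->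
  eventually_large (fun M => forall a, In a l -> P a M).
Proof.
  induction l as [|a l IH]; intros HP.
  - exists 0. intros M _ a [].
  - destruct (eventually_and _ _ (HP a (or_introl eq_refl))
                (IH (fun b Hb => HP b (or_intror Hb)))) as [M0 H0].
    exists M0. intros M HM b Hb. destruct (H0 M HM) as [Ha Hl].
    destruct Hb as [<-|Hb]; auto.
Qed.

Lemma eventually_sq_bounded (H : CHilbert) (B : BOp H) :
  eventually_large (fun M => sq_bounded H M B).
Proof.
  destruct (bop_sq_bounded H B) as [M0 HB]. exists M0. intros M HM.
  exact (sq_bounded_mono H M0 M B HM HB).
Qed.

(** x^j <= j! e^x for x >= 0: x^j/j! is one term of the exponential series. *)
Lemma pow_le_fact_exp (x : R) (j : nat) : 0 <= x -> x ^ j <= INR (fact j) * exp x.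
Proof.
  intros Hx.
  assert (Hterm : forall k, 0 <= / INR (fact k) * x ^ k).
  { intros k. apply Rmult_le_pos; [left; apply Rinv_0_lt_compat, INR_fact_lt_0 | apply pow_le; auto]. }
  assert (Hgrow : Un_growing (E1 x)).
  { intros m. unfold E1. cbn [sum_f_R0]. specialize (Hterm (S m)). lra. }
  assert (Hj : / INR (fact j) * x ^ j <= E1 x j).
  { unfold E1. destruct j as [|j]; cbn [sum_f_R0]; [lra|].
    pose proof (cond_pos_sum (fun k => / INR (fact k) * x ^ k) j Hterm). lra. }
  pose proof (growing_ineq _ _ Hgrow (E1_cvg x) j) as Hexp.
  pose proof (INR_fact_lt_0 j).
  replace (x ^ j) with (INR (fact j) * (/ INR (fact j) * x ^ j)) by (field; lra).
  apply Rmult_le_compat_l; lra.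
Qed.

Lemma exp_INR (l : nat) : exp (INR l) = exp 1 ^ l.
Proof. induction l as [|l IH]; [apply exp_0|]. rewrite S_INR, exp_plus, IH. simpl. ring. Qed.

Lemma sqrt_pow (x : R) (l : nat) : 0 <= x -> sqrt (x ^ l) = sqrt x ^ l.
Proof.
  intros Hx. induction l as [|l IH]; [apply sqrt_1|].
  simpl. rewrite sqrt_mult_alt, IH by auto. reflexivity.
Qed.

Lemma geometric_summable (f : nat -> R) (a r : R) :
  Rabs r < 1 -> (forall l, f l = a * r ^ S l) -> exists s, infinite_sum f s.
Proof.
  intros Hr Hf. exists (/ (1 - r) * (a * r)).
  assert (Hconst : Un_cv (fun _ => a * r) (a * r)).
  { intros e He. exists 0%nat. intros. unfold Rdist. rewrite Rminus_diag, Rabs_R0. lra. }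
  pose proof (CV_mult _ _ _ _ (GP_infinite r Hr) Hconst) as Hcv.
  intros e He. destruct (Hcv e He) as [N HN]. exists N. intros m Hm.
  replace (sum_f_R0 f m) with (sum_f_R0 (fun i => 1 * r ^ i) m * (a * r)); [apply HN; exact Hm|].
  rewrite Rmult_comm, scal_sum. apply sum_eq. intros i _. rewrite Hf. simpl. ring.
Qed.

Section Generators.
Variables (H : CHilbert) (n : nat) (c : ACCoef H).

Definition coef_op (B : BOp H) : Prop :=
  In B [E11 c; E10 c; E01 c; E00 c; E11s c; E10s c; E01s c; E00s c] \/
  (exists i, (i <= n)%nat /\ In B [Fc c i; Gc c i; Fcs c i; Gcs c i]) \/
  (exists i j, (i <= n)%nat /\ (j <= n)%nat /\ In B [Sc c i j; Scs c i j]).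

Definition coef_bounded (M : R) : Prop :=
  1 <= M /\ forall B, coef_op B -> sq_bounded H M B.

Lemma coef_bounded_exists : exists M, coef_bounded M.
Proof.
  set (P (B : BOp H) (M : R) := sq_bounded H M B).
  assert (Hlist : forall l : list (BOp H), eventually_large (fun M => forall B, In B l -> P B M)).
  { intros l. apply eventually_forall_In. intros B _. apply eventually_sq_bounded. }
  assert (HF : eventually_large (fun M => forall i, (i <= n)%nat ->
                 forall B, In B [Fc c i; Gc c i; Fcs c i; Gcs c i] -> P B M)).
  { apply eventually_forall_le. intros i. apply Hlist. }
  assert (HS : eventually_large (fun M => forall i, (i <= n)%nat -> forall j, (j <= n)%nat ->
                 forall B, In B [Sc c i j; Scs c i j] -> P B M)).
  { apply eventually_forall_le. intros i. apply eventually_forall_le. intros j. apply Hlist. }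
  assert (H1 : eventually_large (fun M => 1 <= M)) by (exists 1; auto).
  destruct (eventually_and _ _ H1 (eventually_and _ _ (Hlist [E11 c; E10 c; E01 c; E00 c;
    E11s c; E10s c; E01s c; E00s c]) (eventually_and _ _ HF HS))) as [M0 HM0].
  exists (Rmax M0 1). destruct (HM0 _ (Rmax_l M0 1)) as [HM1 [HE [HFM HSM]]].
  split; [exact HM1|].
  intros B [HB | [[i [Hi HB]] | [i [j [Hi [Hj HB]]]]]].
  - exact (HE B HB).
  - exact (HFM i Hi B HB).
  - exact (HSM i Hi j Hj B HB).
Qed.

Variable M : R.
Hypothesis HM : coef_bounded M.

Lemma coef_sq_bounded (B : BOp H) : coef_op B -> sq_bounded H M B.
Proof. apply (proj2 HM). Qed.

Ltac coef_in := apply coef_sq_bounded; unfold coef_op; simpl; eauto 10.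

(** K and K^*: the four terms give exactly
    2(2MN^2 + 2MN) + 2(2MN + 2M) = 4M(N+1)^2. *)
Lemma level_K N : level_bound H (Kop c) N (S N) (4 * M * INR (S N) ^ 2).
Proof.
  pose proof (proj1 HM). pose proof (pos_INR N).
  apply (level_weaken _ _ N (S N) (S N)
    (2 * (2 * (M * INR N ^ 2) + 2 * (M * INR N)) + 2 * (2 * (M * INR N) + 2 * M)));
    [rewrite S_INR; right; ring | lia |].
  unfold Kop. apply level_ladd; apply level_ladd.
  - apply level_raise, (level_comp H _ _ N N); [lra | apply level_numop | apply level_lmap; coef_in].
  - apply (level_comp H _ _ N (S N)); [lra | apply level_bdag | apply level_lmap; coef_in].
  - apply level_raise, (level_comp H _ _ N N); [lra | apply level_bann | apply level_lmap; coef_in].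
  - apply level_raise, level_lmap; coef_in.
Qed.

Lemma level_Ks N : level_bound H (Ksop c) N (S N) (4 * M * INR (S N) ^ 2).
Proof.
  pose proof (proj1 HM). pose proof (pos_INR N).
  apply (level_weaken _ _ N (S N) (S N)
    (2 * (2 * (M * INR N ^ 2) + 2 * (M * INR N)) + 2 * (2 * (M * INR N) + 2 * M)));
    [rewrite S_INR; right; ring | lia |].
  unfold Ksop. apply level_ladd; apply level_ladd.
  - apply level_raise, (level_comp H _ _ N N); [lra | apply level_numop | apply level_lmap; coef_in].
  - apply level_raise, (level_comp H _ _ N N); [lra | apply level_bann | apply level_lmap; coef_in].
  - apply (level_comp H _ _ N (S N)); [lra | apply level_bdag | apply level_lmap; coef_in].
  - apply level_raise, level_lmap; coef_in.
Qed.

Lemma level_L i N : (i <= n)%nat -> level_bound H (Lop c i) N (S N) (4 * M * INR (S N)).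
Proof.
  intros Hi. pose proof (proj1 HM). pose proof (pos_INR N).
  apply (level_weaken _ _ N (S N) (S N) (2 * (M * INR N) + 2 * M));
    [rewrite S_INR; nra | lia |].
  unfold Lop. apply level_ladd.
  - apply (level_comp H _ _ N (S N)); [lra | apply level_bdag | apply level_lmap; coef_in].
  - apply level_raise, level_lmap; coef_in.
Qed.

Lemma level_Ls i N : (i <= n)%nat -> level_bound H (Lsop c i) N N (4 * M * INR (S N)).
Proof.
  intros Hi. pose proof (proj1 HM). pose proof (pos_INR N).
  apply (level_weaken _ _ N N N (2 * (M * INR N) + 2 * M));
    [rewrite S_INR; nra | lia |].
  unfold Lsop. apply level_ladd.
  - apply (level_comp H _ _ N N); [lra | apply level_bann | apply level_lmap; coef_in].
  - apply level_lmap; coef_in.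
Qed.

Lemma level_N i j N : (i <= n)%nat -> (j <= n)%nat -> level_bound H (Nop c i j) N N M.
Proof. intros Hi Hj. apply level_lmap; coef_in. Qed.

Lemma level_Ns i j N : (i <= n)%nat -> (j <= n)%nat -> level_bound H (Nsop c i j) N N M.
Proof. intros Hi Hj. apply level_lmap; coef_in. Qed.

Definition gen_const : R := 4 ^ n * 4 * M * M.

Lemma gen_const_pos : 0 < gen_const.
Proof.
  unfold gen_const. pose proof (proj1 HM). pose proof (pow_lt 4 n ltac:(lra)).
  repeat apply Rmult_lt_0_compat; lra.
Qed.

Lemma level_M i N : (i <= n)%nat -> level_bound H (Mop n c i) N (S N) (gen_const * INR (S N)).
Proof.
  intros Hi. pose proof (pos_INR (S N)). pose proof (proj1 HM).
  apply (level_weaken _ _ N (S N) (S N) (4 ^ n * (M * (4 * M * INR (S N)))));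
    [unfold gen_const; right; ring | lia |].
  unfold Mop. apply level_lopp, level_dsum; [nra|]. intros j Hj.
  apply level_raise, (level_comp H _ _ N N N); [lra | apply level_Ls; lia | apply level_N; lia].
Qed.

Lemma level_Ms i N : (i <= n)%nat -> level_bound H (Msop n c i) N (S N) (gen_const * INR (S N)).
Proof.
  intros Hi. pose proof (pos_INR (S N)). pose proof (proj1 HM).
  apply (level_weaken _ _ N (S N) (S N) (4 ^ n * (4 * M * INR (S N) * M)));
    [unfold gen_const; right; ring | lia |].
  unfold Msop. apply level_lopp, level_dsum; [nra|]. intros j Hj.
  apply (level_comp H _ _ N N); [nra | apply level_Ns; lia | apply level_L; lia].
Qed.

Lemma level_gen (g : Gen) N :
  gen_ok n g -> level_bound H (gen_op n c g) N (S N) (gen_const * INR (S N) ^ S (isK g)).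
Proof.
  intros Hg. pose proof (proj1 HM) as HM1.
  assert (H4n : 1 <= 4 ^ n) by (apply pow_R1_Rle; lra).
  assert (HT : 1 <= INR (S N)) by (rewrite S_INR; pose proof (pos_INR N); lra).
  assert (HA : 4 * M <= gen_const) by (unfold gen_const; nra).
  assert (HAT : 4 * M * INR (S N) <= gen_const * INR (S N)) by nra.
  assert (HAT2 : 4 * M * INR (S N) ^ 2 <= gen_const * INR (S N) ^ 2).
  { apply Rmult_le_compat_r; [apply pow_le|]; lra. }
  destruct g; simpl in Hg; cbn [isK gen_op]; rewrite ?pow_1.
  - apply (level_weaken _ _ N (S N) (S N) _ _ HAT2 (le_n _)), level_K.
  - apply (level_weaken _ _ N (S N) (S N) _ _ HAT2 (le_n _)), level_Ks.
  - apply (level_weaken _ _ N (S N) (S N) _ _ HAT (le_n _)), level_L; lia.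
  - apply (level_weaken _ _ N N (S N) _ _ HAT (Nat.le_succ_diag_r _)), level_Ls; lia.
  - apply level_M; lia.
  - apply level_Ms; lia.
  - apply (level_weaken _ _ N N (S N) M); [nra | lia | apply level_N; lia].
  - apply (level_weaken _ _ N N (S N) M); [nra | lia | apply level_Ns; lia].
Qed.

Lemma level_word (xs : list Gen) d :
  Forall (gen_ok n) xs ->
  level_bound H (apply_gens n c xs) d (d + length xs)
    (gen_const ^ length xs * INR (d + length xs) ^ (length xs + countK xs)).
Proof.
  intros Hxs. pose proof (proj1 HM).
  assert (HA : 0 <= gen_const) by (left; apply gen_const_pos).
  induction Hxs as [|g xs Hg Hxs IH].
  - intros u Hu. simpl. rewrite Nat.add_0_r. split; [lra | exact Hu].
  - change (length (g :: xs)) with (S (length xs)).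
    change (countK (g :: xs)) with (isK g + countK xs)%nat. rewrite Nat.add_succ_r.
    set (k := length xs) in *. set (m := countK xs) in *. set (T := INR (S (d + k))).
    assert (HDT : 0 <= INR (d + k) <= T) by (split; [apply pos_INR | apply le_INR; lia]).
    assert (HT : 0 <= T) by lra.
    apply (level_weaken _ _ d (S (d + k)) (S (d + k))
      ((gen_const * T ^ S (isK g)) * (gen_const ^ k * INR (d + k) ^ (k + m)))); [| lia |].
    + replace (S k + (isK g + m))%nat with (S (isK g) + (k + m))%nat by lia.
      rewrite (pow_add T (S (isK g))). simpl (gen_const ^ S k).
      assert (INR (d + k) ^ (k + m) <= T ^ (k + m)) by (apply pow_incr; lra).
      assert (0 <= gen_const ^ k) by (apply pow_le; lra).
      assert (0 <= T ^ S (isK g)) by (apply pow_le; lra).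
      assert (0 <= gen_const * T ^ S (isK g) * gen_const ^ k) by
        (apply Rmult_le_pos; [apply Rmult_le_pos|]; lra).
      apply Rle_trans with (gen_const * T ^ S (isK g) * gen_const ^ k * INR (d + k) ^ (k + m));
        [right; ring|].
      apply Rle_trans with (gen_const * T ^ S (isK g) * gen_const ^ k * T ^ (k + m));
        [apply Rmult_le_compat_l; assumption | right; ring].
    + apply (level_comp H (apply_gens n c xs) (gen_op n c g) d (d + k) (S (d + k))).
      * apply Rmult_le_pos; [|apply pow_le]; lra.
      * exact IH.
      * apply level_gen; exact Hg.
Qed.

Lemma word_norm_bound (xs : list Gen) (u : DV H) :
  Forall (gen_ok n) xs ->
  lnorm (apply_gens n c xs u) <=
    sqrt (exp (INR (length u)) * dnorm2 H u) * sqrt (gen_const * exp 1) ^ length xs *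
    sqrt (INR (fact (length xs + countK xs))).
Proof.
  intros Hxs. set (d := length u). set (l := length xs). set (j := (l + countK xs)%nat).
  pose proof (proj1 HM).
  assert (HA : 0 <= gen_const) by (left; apply gen_const_pos).
  pose proof (exp_pos 1). pose proof (exp_pos (INR d)). pose proof (dnorm2_ge0 H u).
  pose proof (pos_INR (fact j)).
  destruct (level_word xs d Hxs u (le_n d)) as [Hword _].
  rewrite lnorm_dnorm2, <- sqrt_pow, <- !sqrt_mult_alt
    by (repeat apply Rmult_le_pos; try apply pow_le; nra).
  apply sqrt_le_1_alt. apply (Rle_trans _ _ _ Hword).
  pose proof (pow_le_fact_exp (INR (d + l)) j (pos_INR _)) as Hfact.
  rewrite plus_INR, exp_plus, (exp_INR l) in Hfact.
  assert (0 <= gen_const ^ l) by (apply pow_le; lra).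
  apply Rle_trans with (gen_const ^ l * (INR (fact j) * (exp (INR d) * exp 1 ^ l)) * dnorm2 H u).
  - apply Rmult_le_compat_r; [lra|]. apply Rmult_le_compat_l; [lra|].
    rewrite plus_INR. exact Hfact.
  - rewrite Rpow_mult_distr. right; ring.
Qed.

End Generators.

Theorem mainTheorem6 (H : CHilbert) (n : nat) (c : ACCoef H)
  (Hadj : ac_adjoint n c) (HHP : ac_HP n c) :
  exists eps : R, 0 < eps /\
    forall u : DV H, exists cc : nat -> R,
      (forall l, 0 <= cc l) /\
      (exists s, infinite_sum (fun l => cc (S l) * eps ^ (S l)) s) /\
      (forall xs : list Gen, (1 <= length xs)%nat -> Forall (gen_ok n) xs ->
         lnorm (apply_gens n c xs u)
           <= cc (length xs) * sqrt (INR (fact (length xs + countK xs)))).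
Proof.
  destruct (coef_bounded_exists H n c) as [M HM].
  set (q := sqrt (gen_const n M * exp 1)).
  assert (Hq : 0 < q).
  { apply sqrt_lt_R0, Rmult_lt_0_compat; [apply (gen_const_pos H n c M HM) | apply exp_pos]. }
  exists (/ (2 * q)). split; [apply Rinv_0_lt_compat; lra|].
  intros u. set (K := sqrt (exp (INR (length u)) * dnorm2 H u)).
  exists (fun l => K * q ^ l). split; [|split].
  - intros l. apply Rmult_le_pos; [apply sqrt_pos | apply pow_le; lra].
  - apply (geometric_summable _ K (/ 2)); [rewrite Rabs_right; lra|].
    intros l. rewrite Rmult_assoc, <- Rpow_mult_distr.
    replace (q * / (2 * q)) with (/ 2) by (field; lra). reflexivity.
  - intros xs _ Hxs. apply (word_norm_bound H n c M HM xs u Hxs).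
Qed.
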